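(* Let $g(x,y)=\sum_{i,j=-\infty}^{\infty}c(i,j)x^iy^j$ be a nonzero bilateral formal series. Then $g\perp g$ if and only if there exist integers $m_0,k_0$ with $c(m_0,k_0)\neq0$ such that for all integers $i,j$, $$c(m_0,k_0)c(i,j)-c(m_0,i)c(k_0,j)+c(m_0,j)c(k_0,i)=0.$$
   Context: A bilateral formal series in $x,y$ is a formal expression $\sum_{i,j\in\mathbb{Z}}c(i,j)x^iy^j$ with complex coefficients. For two such series $f,g$, the expression $g(u,v)f(z,w)-g(u,w)f(z,v)+g(v,w)f(z,u)$ is a well-defined formal series in four independent variables $u,v,w,z$. One writes $f\perp g$ if this expression is identically zero. *)

From HB Require Import structures.
From mathcomp Require Import all_boot all_order all_algebra.
From mathcomp Require Import complex.
From mathcomp Require Import Rstruct.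
Set Implicit Arguments. Unset Strict Implicit. Unset Printing Implicit Defensive.
Import Order.TTheory GRing.Theory Num.Theory.
Local Open Scope ring_scope.

Definition CC : Type := complex Rdefinitions.R.

(* A bilateral formal series sum_{i,j in Z} c(i,j) x^i y^j, represented by its
   coefficient function c. *)
Definition bseries : Type := int -> int -> CC.

(* The coefficient of u^a v^b w^e z^d in the four-variable formal series
   g(u,v) f(z,w) - g(u,w) f(z,v) + g(v,w) f(z,u). *)
Definition perp_expr (f g : bseries) (a b e d : int) : CC :=
  g a b * f d e - g a e * f d b + g b e * f d a.

Definition perp (f g : bseries) : Prop :=
  forall a b e d : int, perp_expr f g a b e d = 0.

(* Taking a = b = e = d in the relation defining g ⊥ g gives g(a,a)^2 = 0, and
   then (a, b, a, b) and (b, a, b, a) give (g(a,b) + g(b,a))^2 = 0, so g is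
   antisymmetric; with antisymmetry the relation at (m, k, j, i) is exactly the
   pivot identity at (m, k).  Conversely, the pivot identity writes
   c g(i,j) = g(m,i) g(k,j) - g(m,j) g(k,i) with c = g(m,k) != 0, i.e. c g is a
   wedge of two rows, and substituting this into c^2 times the relation makes
   it vanish identically (the Plücker relation of a decomposable bivector). *)
From HB Require Import structures.
From mathcomp Require Import all_boot all_order all_algebra.
From mathcomp Require Import complex.
From mathcomp Require Import Rstruct.
From mathcomp Require Import ring.
Import Order.TTheory GRing.Theory Num.Theory.
Local Open Scope ring_scope.

Section SelfOrthogonal.

Variables (R : idomainType) (I : Type) (g : I -> I -> R).
Implicit Types a b e d i j m k : I.

Definition self_perp : Prop :=
  forall a b e d, g a b * g d e - g a e * g d b + g b e * g d a = 0.

Definition pivot_identity m k : Prop :=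
  forall i j, g m k * g i j - g m i * g k j + g m j * g k i = 0.

Lemma self_perp_diag : self_perp -> forall a, g a a = 0.
Proof.
move=> gg a; apply/eqP; rewrite -sqrf_eq0; apply/eqP.
by rewrite -(gg a a a a); ring.
Qed.

Lemma self_perp_antisym : self_perp -> forall a b, g a b = - g b a.
Proof.
move=> gg a b; apply/eqP; rewrite -addr_eq0 -sqrf_eq0; apply/eqP.
transitivity ((g b a * g a b - g b b * g a a + g a b * g a b)
              + (g a b * g b a - g a a * g b b + g b a * g b a)).
  by rewrite !(self_perp_diag gg); ring.
by rewrite gg gg addr0.
Qed.

Lemma self_perp_pivot m k : self_perp -> pivot_identity m k.
Proof.
move=> gg i j; rewrite -(gg m k j i) (self_perp_antisym gg i k).
rewrite (self_perp_antisym gg i m); ring.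
Qed.

Lemma pivot_self_perp m k : g m k != 0 -> pivot_identity m k -> self_perp.
Proof.
move=> gmk0 piv a b e d.
have wedge i j : g m k * g i j = g m i * g k j - g m j * g k i.
  by apply/eqP; rewrite -subr_eq0 -(piv i j); apply/eqP; ring.
suff /eqP : g m k * g m k * (g a b * g d e - g a e * g d b + g b e * g d a) = 0.
  by rewrite mulf_eq0 (negbTE (mulf_neq0 gmk0 gmk0)) => /eqP.
transitivity ((g m k * g a b) * (g m k * g d e) - (g m k * g a e) * (g m k * g d b)
              + (g m k * g b e) * (g m k * g d a)); first by ring.
by rewrite !wedge; ring.
Qed.

End SelfOrthogonal.

Theorem lemma2p3 (g : bseries) :
  (exists i j : int, g i j != 0) ->
  (perp g g <->
   exists m0 k0 : int, g m0 k0 != 0 /\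
     forall i j : int,
       g m0 k0 * g i j - g m0 i * g k0 j + g m0 j * g k0 i = 0).
Proof.
move=> [i0 [j0 gij0]]; split.
- by move=> gg; exists i0, j0; split; last exact: self_perp_pivot.
- by move=> [m0 [k0 [gmk0 piv]]]; exact: pivot_self_perp gmk0 piv.
Qed.
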